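(* (1) For every class $\mathcal K$ of algebras of the same type $F$, $\mathsf V(\mathsf D(\mathcal K))=\mathsf V(\mathcal K)_\tau$. (2) Let $\mathcal K_1,\mathcal K_2$ be two classes of algebras of type $F$. Then $\mathsf V(\mathsf D(\mathcal K_1))=\mathsf V(\mathsf D(\mathcal K_2))$ if and only if $\mathsf V(\mathcal K_1)=\mathsf V(\mathcal K_2)$.
   Context: A state-morphism on an algebra $\mathbf A$ of type $F$ is an endomorphism $\tau$ of $\mathbf A$ with $\tau\circ\tau=\tau$; $(\mathbf A,\tau)$ is a state-morphism algebra (type $F$ plus one unary operation). For a variety $\mathcal V$ of type $F$, $\mathcal V_\tau$ is the variety of all state-morphism algebras $(\mathbf A,\tau)$ with $\mathbf A\in\mathcal V$. $D(\mathbf B)=(\mathbf B\times\mathbf B,\tau_B)$ with $\tau_B(x,y)=(x,x)$, and $\mathsf D(\mathcal K)=\{D(\mathbf B):\mathbf B\in\mathcal K\}$. $\mathsf V(\cdot)$ denotes the generated variety. *)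

From mathcomp Require Import all_boot.
Set Implicit Arguments. Unset Strict Implicit. Unset Printing Implicit Defensive.

Record signature := Signature { op : Type; arity : op -> nat }.

Record algebra (F : signature) := Algebra {
  carrier :> Type;
  interp : forall f : op F, ('I_(arity f) -> carrier) -> carrier }.
Arguments interp {F} a f _.

Definition is_hom (F : signature) (A B : algebra F) (h : A -> B) : Prop :=
  forall (f : op F) (a : 'I_(arity f) -> A), h (interp A f a) = interp B f (fun i => h (a i)).

Definition class (F : signature) := algebra F -> Prop.

Definition prod_alg (F : signature) (I : Type) (A : I -> algebra F) : algebra F :=
  @Algebra F (forall i, A i) (fun f a => fun i => interp (A i) f (fun k => a k i)).

Definition is_variety (F : signature) (C : class F) : Prop :=
  [/\ (forall (A B : algebra F) (h : A -> B),
         C A -> is_hom h -> (forall b, exists a, h a = b) -> C B),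
      (forall (A B : algebra F) (h : B -> A),
         C A -> is_hom h -> injective h -> C B) &
      (forall (I : Type) (A : I -> algebra F),
         (forall i, C (A i)) -> C (prod_alg A))].

Definition gen_variety (F : signature) (K : class F) : class F :=
  fun B => forall C : class F, is_variety C -> (forall A, K A -> C A) -> C B.

Definition sig_tau (F : signature) : signature :=
  @Signature (option (op F)) (fun o => if o is Some f then arity f else 1%N).

Definition reduct (F : signature) (B : algebra (sig_tau F)) : algebra F :=
  @Algebra F B (fun f a => interp B (Some f) a).

Definition tau_of (F : signature) (B : algebra (sig_tau F)) : reduct B -> reduct B :=
  fun x => interp B None (fun _ => x).

Definition is_state_morphism (F : signature) (A : algebra F) (t : A -> A) : Prop :=
  is_hom t /\ (forall x, t (t x) = t x).

Definition tau_class (F : signature) (V : class F) : class (sig_tau F) :=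
  fun B => V (reduct B) /\ @is_state_morphism F (reduct B) (@tau_of F B).

Definition D_alg (F : signature) (B : algebra F) : algebra (sig_tau F) :=
  @Algebra (sig_tau F) (B * B)%type
    (fun o => match o return ('I_(arity (s := sig_tau F) o) -> (B * B)%type) -> (B * B)%type with
              | Some f => fun a => (interp B f (fun i => (a i).1), interp B f (fun i => (a i).2))
              | None => fun a => ((a ord0).1, (a ord0).1)
              end).

Definition D_class (F : signature) (K : class F) : class (sig_tau F) :=
  fun B => exists A, K A /\ B = D_alg A.

From mathcomp Require Import all_boot.
From Stdlib Require Import FunctionalExtensionality ClassicalEpsilon.
Set Implicit Arguments. Unset Strict Implicit.

(* V(D(K)) is contained in V(K)_tau because V(K)_tau is a variety containing
   D(K): the square of A embeds into A^2 and (x, y) |-> (x, x) is an idempotent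
   endomorphism.  Conversely, D maps the variety V(K) into V(D(K)) (D commutes
   with H, S and P), and every state-morphism algebra (B, tau) embeds into
   D(B) via x |-> (tau x, x).  Part (2) follows since A is the image of the
   reduct of D(A) under the first projection, so V(K) is recovered from
   V(K)_tau. *)

Lemma surj_section (A B : Type) (h : A -> B) :
  (forall b, exists a, h a = b) -> exists g : B -> A, forall b, h (g b) = b.
Proof.
move=> h_surj; exists (fun b => proj1_sig (constructive_indefinite_description _ (h_surj b))).
by move=> b; case: (constructive_indefinite_description _ (h_surj b)).
Qed.

Section GeneratedVariety.
Variables (F : signature) (K : class F).

Lemma gen_variety_incl (A : algebra F) : K A -> gen_variety K A.
Proof. by move=> KA C _; apply. Qed.

Lemma gen_variety_is_variety : is_variety (gen_variety K).
Proof.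
split.
- move=> A B h VA hom_h surj_h C varC KC.
  by case: (varC) => closedH _ _; apply: closedH (VA C varC KC) hom_h surj_h.
- move=> A B h VA hom_h inj_h C varC KC.
  by case: (varC) => _ closedS _; apply: closedS (VA C varC KC) hom_h inj_h.
- move=> I A VA C varC KC.
  by case: (varC) => _ _ closedP; apply: closedP => i; apply: VA.
Qed.

End GeneratedVariety.

Section StateMorphismAlgebras.
Variable F : signature.

Lemma hom_reduct (A B : algebra (sig_tau F)) (h : A -> B) :
  is_hom h -> is_hom (A := reduct A) (B := reduct B) h.
Proof. by move=> hom_h f; apply: (hom_h (Some f)). Qed.

Lemma hom_tau_of (A B : algebra (sig_tau F)) (h : A -> B) (x : A) :
  is_hom h -> h (tau_of x) = tau_of (h x).
Proof. by move=> hom_h; rewrite /tau_of (hom_h None). Qed.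

Lemma tau_class_variety (V : class F) : is_variety V -> is_variety (tau_class V).
Proof.
case=> closedH closedS closedP; split.
- move=> A B h [VA [hom_tA tA_idem]] hom_h surj_h.
  have [g hg] := surj_section surj_h.
  split; first exact: closedH VA (hom_reduct hom_h) surj_h.
  split=> [f b | y]; last by rewrite -[y]hg -!(hom_tau_of _ hom_h) tA_idem.
  have -> : b = (fun i => h (g (b i))) by apply: functional_extensionality => i.
  rewrite /= -(hom_h (Some f)) -(hom_tau_of _ hom_h).
  have /= -> := hom_tA f (fun i => g (b i)).
  rewrite (hom_h (Some f)); congr (interp B (Some f)).
  by apply: functional_extensionality => i; rewrite hom_tau_of.
- move=> A B h [VA [hom_tA tA_idem]] hom_h inj_h.
  split; first exact: closedS VA (hom_reduct hom_h) inj_h.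
  split=> [f b | y]; apply: inj_h; last by rewrite !hom_tau_of // tA_idem.
  rewrite hom_tau_of // (hom_h (Some f)) (hom_tA f) (hom_h (Some f)).
  congr (interp A (Some f)).
  by apply: functional_extensionality => i; rewrite hom_tau_of.
- move=> I A tauA; split; first by apply: (closedP I (fun i => reduct (A i))) => i; case: (tauA i).
  split=> [f a | x]; apply: functional_extensionality_dep => i.
  + exact: (tauA i).2.1 f (fun k => a k i).
  + exact: (tauA i).2.2 (x i).
Qed.

Lemma reduct_D_alg_in (V : class F) (A : algebra F) :
  is_variety V -> V A -> V (reduct (D_alg A)).
Proof.
case=> _ closedS closedP VA.
pose pair_to_fun (p : reduct (D_alg A)) : prod_alg (fun _ : bool => A) :=
  fun b => if b then p.1 else p.2.
apply: (closedS _ _ pair_to_fun (closedP bool (fun _ => A) (fun _ => VA))).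
  by move=> f a; apply: functional_extensionality; case.
move=> [x y] [x' y'] e.
by move: (f_equal (fun p => p true) e) (f_equal (fun p => p false) e) => /= -> ->.
Qed.

Lemma D_alg_tau_class (V : class F) (A : algebra F) :
  is_variety V -> V A -> tau_class V (D_alg A).
Proof. by move=> varV VA; split; [apply: reduct_D_alg_in | split]. Qed.

Lemma tau_class_reduct_D_alg (V : class F) (A : algebra F) :
  is_variety V -> tau_class V (D_alg A) -> V A.
Proof.
case=> closedH _ _ [VDA _].
by apply: (closedH (reduct (D_alg A)) A (fun p => p.1) VDA) => // a; exists (a, a).
Qed.

Lemma D_alg_preimage_variety (C : class (sig_tau F)) :
  is_variety C -> is_variety (fun A => C (D_alg A)).
Proof.
case=> closedH closedS closedP; split.
- move=> A B h CDA hom_h surj_h.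
  have [g hg] := surj_section surj_h.
  apply: (closedH (D_alg A) (D_alg B) (fun p => (h p.1, h p.2)) CDA).
    by case=> [f|] a //=; rewrite !hom_h.
  by move=> [x y]; exists (g x, g y); rewrite /= !hg.
- move=> A B h CDA hom_h inj_h.
  apply: (closedS (D_alg A) (D_alg B) (fun p => (h p.1, h p.2)) CDA).
    by case=> [f|] a //=; rewrite !hom_h.
  by move=> [x y] [x' y'] [/inj_h -> /inj_h ->].
- move=> I A CDA.
  pose unzip (p : D_alg (prod_alg A)) : prod_alg (fun i => D_alg (A i)) :=
    fun i => (p.1 i, p.2 i).
  apply: (closedS _ _ unzip (closedP I (fun i => D_alg (A i)) CDA)); first by case.
  move=> [x y] [x' y'] e; congr pair; apply: functional_extensionality_dep => i.
  + by move: (f_equal (fun p => (p i).1) e).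
  + by move: (f_equal (fun p => (p i).2) e).
Qed.

Lemma D_alg_gen_variety (K : class F) (A : algebra F) :
  gen_variety K A -> gen_variety (D_class K) (D_alg A).
Proof.
move=> VA; apply: VA (D_alg_preimage_variety (gen_variety_is_variety _)) _.
by move=> A' KA'; apply: gen_variety_incl; exists A'.
Qed.

Lemma embed_D_alg_reduct (B : algebra (sig_tau F)) :
  is_state_morphism (tau_of (B := B)) ->
  is_hom (A := B) (B := D_alg (reduct B)) (fun x => (tau_of x, x)).
Proof.
move=> [hom_tB tB_idem] [f|] a; first by rewrite /= (hom_tB f).
have -> : a = (fun=> a ord0) by apply: functional_extensionality => i; rewrite (ord1 i).
by rewrite /= -[interp B None _]/(tau_of (a ord0)) tB_idem.
Qed.

Lemma gen_variety_D_class (K : class F) (B : algebra (sig_tau F)) :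
  gen_variety (D_class K) B <-> tau_class (gen_variety K) B.
Proof.
split=> [VB | [VB tauB]].
- apply: VB (tau_class_variety (gen_variety_is_variety K)) _.
  move=> _ [A [KA ->]].
  exact: D_alg_tau_class (gen_variety_is_variety K) (gen_variety_incl KA).
- have [_ closedS _] := gen_variety_is_variety (D_class K).
  apply: closedS (D_alg_gen_variety VB) (embed_D_alg_reduct tauB) _.
  by move=> x y [].
Qed.

Lemma gen_variety_incl_of_D_class (K K' : class F) :
  (forall B, gen_variety (D_class K) B -> gen_variety (D_class K') B) ->
  forall A, gen_variety K A -> gen_variety K' A.
Proof.
move=> incl A /D_alg_gen_variety /incl /gen_variety_D_class.
exact: tau_class_reduct_D_alg (gen_variety_is_variety K').
Qed.

End StateMorphismAlgebras.

Theorem theorem4p3 (F : signature) :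
  (forall K : class F,
     forall B : algebra (sig_tau F),
       gen_variety (D_class K) B <-> tau_class (gen_variety K) B) /\
  (forall K1 K2 : class F,
     (forall B : algebra (sig_tau F),
        gen_variety (D_class K1) B <-> gen_variety (D_class K2) B) <->
     (forall A : algebra F, gen_variety K1 A <-> gen_variety K2 A)).
Proof.
split; first exact: gen_variety_D_class.
move=> K1 K2; split=> [eqVD A | eqV B].
- by split; apply: gen_variety_incl_of_D_class => B; case: (eqVD B).
- by rewrite !gen_variety_D_class /tau_class eqV.
Qed.
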